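(* For each integer $d\ge 1$ let $\Delta^{d-1}=\{p\in\mathbb{R}^d_{\ge 0}:\sum_{f=1}^d p_f=1\}$ be the standard simplex, and let \[ \Psi^{(d)}:\mathbb{R}_{\ge 0}^d\setminus\{0\}\to \Delta^{d-1} \] be a map (a ''local share rule''). Assume the family $\{\Psi^{(d)}\}_{d\ge 1}$ satisfies refinement consistency: for every $d\ge1$, every $a=(a_1,\dots,a_d)\in\mathbb{R}^d_{\ge0}\setminus\{0\}$, every index $k\in\{1,\dots,d\}$ and every $r,q\ge 0$ with $r+q=a_k$, the refined vector \[ a^{[k\to(r,q)]}=(a_1,\dots,a_{k-1},r,q,a_{k+1},\dots,a_d)\in\mathbb{R}^{d+1}_{\ge0} \] satisfies, when $a_k>0$, \[ \Psi^{(d+1)}\!\left(a^{[k\to(r,q)]}\right)=\left(\Psi_1^{(d)}(a),\dots,\Psi_{k-1}^{(d)}(a),\tfrac{r}{a_k}\Psi_k^{(d)}(a),\tfrac{q}{a_k}\Psi_k^{(d)}(a),\Psi_{k+1}^{(d)}(a),\dots,\Psi_d^{(d)}(a)\right), \] and, when $a_k=0$, $\Psi^{(d+1)}(a^{[k\to(0,0)]})$ agrees with $\Psi^{(d)}(a)$ on all non-refined coordinates (in the same order) and assigns the value $0$ to the two refined coordinates. Then for every $d\ge1$, every $a\in\mathbb{R}^d_{\ge0}\setminus\{0\}$ and every $f\in\{1,\dots,d\}$, \[ \Psi^{(d)}_f(a)=\frac{a_f}{\sum_{g=1}^d a_g}. \]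
   Context: The requirement that each $\Psi^{(d)}$ takes values in the simplex (nonnegative entries summing to one) is called ''budgeting''. Entries $a_f$ are interpreted as nonnegative local efforts of factors. *)

From mathcomp Require Import all_boot all_order all_algebra.
From mathcomp Require Import reals.
Set Implicit Arguments. Unset Strict Implicit. Unset Printing Implicit Defensive.
Import Order.TTheory GRing.Theory Num.Theory.
Local Open Scope ring_scope.

(* Vectors in R^d are functions 'I_d -> R; coordinate f (1-based in the paper)
   is the ordinal f-1. *)

Definition nonneg_nonzero (R : realType) (d : nat) (a : 'I_d -> R) : Prop :=
  (forall i, 0 <= a i) /\ (exists i, a i != 0).

Definition in_simplex (R : realType) (d : nat) (p : 'I_d -> R) : Prop :=
  (forall i, 0 <= p i) /\ \sum_(i < d) p i = 1.

(* nat-indexed access to a vector (0 outside the range; only used in range) *)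
Definition getv (R : realType) (d : nat) (a : 'I_d -> R) (i : nat) : R :=
  match insub i with Some i' => a i' | None => 0 end.

(* a^{[k -> (r,q)]} = (a_0,...,a_{k-1}, r, q, a_{k+1}, ..., a_{d-1}) in R^{d+1}
   (0-based indices). *)
Definition refine (R : realType) (d : nat) (a : 'I_d -> R) (k : 'I_d) (r q : R)
  : 'I_d.+1 -> R :=
  fun j => if (j < k)%N then getv a j
           else if (j == k :> nat) then r
           else if (j == k.+1 :> nat) then q
           else getv a j.-1.

(* Merging the first two coordinates of a gives a vector b of
   length d-1 with the same total, so Psi b is proportional to b by induction;
   since a is the refinement of b at its first coordinate into (a_1, a_2),
   refinement consistency splits the share of b_1 = a_1 + a_2 proportionally
   (into zeros when a_1 = a_2 = 0), which is again the proportional share. *)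
From mathcomp Require Import all_boot all_order all_algebra.
From mathcomp Require Import boolp reals.
Set Implicit Arguments. Unset Strict Implicit.
Import Order.TTheory GRing.Theory Num.Theory.
Local Open Scope ring_scope.

Definition prop_share (R : realType) (d : nat) (a : 'I_d -> R) : 'I_d -> R :=
  fun i => a i / \sum_(j < d) a j.

Lemma nonneg_nonzeroE (R : realType) (d : nat) (a : 'I_d -> R) :
  (forall i, 0 <= a i) -> nonneg_nonzero a <-> 0 < \sum_(i < d) a i.
Proof.
move=> a_ge0; rewrite lt0r sumr_ge0 // andbT; split.
- case=> _ [i ai_neq0]; apply: contra ai_neq0 => /eqP sum_eq0.
  by rewrite (psumr_eq0P (fun i _ => a_ge0 i) sum_eq0).
- move=> sum_neq0; split=> //; apply/existsP; apply: contraNT sum_neq0.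
  by rewrite negb_exists => /forallP a_eq0; rewrite big1 // => i _; apply/eqP/negPn.
Qed.

Section MergeFirstTwo.
Variables (R : realType) (n : nat).
Implicit Type a : 'I_n.+2 -> R.

Definition merge a : 'I_n.+1 -> R :=
  fun i => if i == ord0 then a ord0 + a (lift ord0 ord0) else a (lift ord0 i).

Lemma refine_merge a : refine (merge a) ord0 (a ord0) (a (lift ord0 ord0)) = a.
Proof.
apply: funext => -[[|[|j]] lt_j] /=; rewrite /refine /=.
1,2: by congr a; apply: val_inj.
rewrite /getv insubT /merge /=; congr a; exact: val_inj.
Qed.

Lemma sum_merge a : \sum_(i < n.+1) merge a i = \sum_(i < n.+2) a i.
Proof.
rewrite big_ord_recl [RHS]big_ord_recl [in RHS]big_ord_recl addrA /merge eqxx.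
by congr (_ + _); apply: eq_bigr => i _; rewrite (negbTE (neq_lift ord0 i)).
Qed.

Lemma merge_nonneg_nonzero a : nonneg_nonzero a -> nonneg_nonzero (merge a).
Proof.
move=> a_nn; have [a_ge0 _] := a_nn.
have merge_ge0 i : 0 <= merge a i by rewrite /merge; case: ifP; rewrite ?addr_ge0.
by apply/nonneg_nonzeroE => //; rewrite sum_merge -nonneg_nonzeroE.
Qed.

Lemma merge_prop_share a : merge (prop_share a) = prop_share (merge a).
Proof.
apply: funext => i.
by rewrite /merge /prop_share sum_merge; case: ifP; rewrite ?mulrDl.
Qed.

End MergeFirstTwo.

Section ShareRule.
Variables (R : realType) (Psi : forall d : nat, ('I_d -> R) -> ('I_d -> R)).
Arguments Psi : clear implicits.

Hypothesis Hbudget : forall (d : nat) (a : 'I_d -> R), (0 < d)%N ->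
  nonneg_nonzero a -> in_simplex (Psi d a).

Hypothesis Hrefpos : forall (d : nat) (a : 'I_d -> R) (k : 'I_d) (r q : R), (0 < d)%N ->
  nonneg_nonzero a -> 0 <= r -> 0 <= q -> r + q = a k -> 0 < a k ->
  forall j : 'I_d.+1,
    Psi d.+1 (refine a k r q) j =
    refine (Psi d a) k (r / a k * Psi d a k) (q / a k * Psi d a k) j.

Hypothesis Hrefzero : forall (d : nat) (a : 'I_d -> R) (k : 'I_d), (0 < d)%N ->
  nonneg_nonzero a -> a k = 0 ->
  forall j : 'I_d.+1, Psi d.+1 (refine a k 0 0) j = refine (Psi d a) k 0 0 j.

Lemma Psi1_prop_share (a : 'I_1 -> R) : nonneg_nonzero a -> Psi 1 a = prop_share a.
Proof.
move=> a_nn; have [_ [i ai_neq0]] := a_nn; have [_ sum_Psi] := Hbudget (ltn0Sn _) a_nn.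
apply: funext => j; rewrite /prop_share !big_ord1 !ord1 in sum_Psi ai_neq0 *.
by rewrite sum_Psi divff.
Qed.

Lemma Psi_prop_share_step (n : nat) (a : 'I_n.+2 -> R) : nonneg_nonzero a ->
  Psi n.+1 (merge a) = prop_share (merge a) -> Psi n.+2 a = prop_share a.
Proof.
move=> a_nn IH; have [a_ge0 _] := a_nn; have b_nn := merge_nonneg_nonzero a_nn.
have b0E : a ord0 + a (lift ord0 ord0) = merge a ord0 by rewrite /merge eqxx.
rewrite -[in LHS](refine_merge a) -[RHS]refine_merge merge_prop_share -IH.
have [b0_eq0 | b0_neq0] := eqVneq (merge a ord0) 0.
- have /andP[/eqP a0_eq0 /eqP a1_eq0] : (a ord0 == 0) && (a (lift ord0 ord0) == 0).
    by rewrite -paddr_eq0 // b0E b0_eq0.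
  rewrite /prop_share a0_eq0 a1_eq0 !mul0r.
  exact: funext (Hrefzero (ltn0Sn _) b_nn b0_eq0).
- have b0_pos : 0 < merge a ord0 by rewrite lt0r b0_neq0 -b0E addr_ge0.
  rewrite (funext (Hrefpos (ltn0Sn _) b_nn (a_ge0 _) (a_ge0 _) b0E b0_pos)).
  by rewrite IH /prop_share sum_merge !mulrA !divfK.
Qed.

Lemma Psi_prop_share (d : nat) (a : 'I_d.+1 -> R) :
  nonneg_nonzero a -> Psi d.+1 a = prop_share a.
Proof.
elim: d a => [|d IH] a a_nn; first exact: Psi1_prop_share.
by apply: Psi_prop_share_step => //; apply/IH/merge_nonneg_nonzero.
Qed.

End ShareRule.

Theorem theorem4p1 (R : realType)
  (Psi : forall d : nat, ('I_d -> R) -> ('I_d -> R))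
  (* budgeting: Psi^(d) maps R^d_{>=0} \ {0} into the simplex *)
  (Hbudget : forall (d : nat) (a : 'I_d -> R), (0 < d)%N ->
      nonneg_nonzero a -> in_simplex (Psi d a))
  (* refinement consistency, case a_k > 0 *)
  (Hrefpos : forall (d : nat) (a : 'I_d -> R) (k : 'I_d) (r q : R), (0 < d)%N ->
      nonneg_nonzero a -> 0 <= r -> 0 <= q -> r + q = a k -> 0 < a k ->
      forall j : 'I_d.+1,
        Psi d.+1 (refine a k r q) j =
        refine (Psi d a) k (r / a k * Psi d a k) (q / a k * Psi d a k) j)
  (* refinement consistency, case a_k = 0 *)
  (Hrefzero : forall (d : nat) (a : 'I_d -> R) (k : 'I_d), (0 < d)%N ->
      nonneg_nonzero a -> a k = 0 ->
      forall j : 'I_d.+1,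
        Psi d.+1 (refine a k 0 0) j = refine (Psi d a) k 0 0 j) :
  forall (d : nat) (a : 'I_d -> R) (f : 'I_d), (0 < d)%N ->
    nonneg_nonzero a -> Psi d a f = a f / \sum_(g < d) a g.
Proof.
move=> [//|d] a f _ a_nn.
by rewrite (Psi_prop_share Hbudget Hrefpos Hrefzero a_nn).
Qed.
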